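(* Let $\mathcal{U}$ be an idempotent ultrafilter in $(\beta\mathbb{N},+)$. If $\mu,\nu\in\mathbb{A}_{\mathcal{U}}$, then $\mu\,\hat{}\,\nu\in\mathbb{A}_{\mathcal{U}}$.
   Context: For $a,b\subseteq(0,1]$ put $a\,\hat{}\,b=\tfrac12 a\cup\tfrac12(b+1)$; $\mathbb{T}$ is the set generated from $\mathbf{1}=\{1\}$ by $\hat{}$ (the free binary system on one generator), $\#(t)$ is the cardinality of $t$, $\mathbb{T}_n=\{t:\#(t)=n\}$, and $\mathbb{A}_n$ is the set of probability measures on $\mathbb{T}_n$. For a set $S$, $\Pr(S)$ denotes the set of finitely additive probability measures on $S$, identified with the positive linear functionals $f$ on $\ell^\infty(S)$ with $f(\bar 1)=1$, equipped with the weak* topology; $\mathbb{A}_n\subseteq\Pr(\mathbb{T})$. For $\mu,\nu\in\Pr(\mathbb{T})$, $(\mu\,\hat{}\,\nu)(f)=\int\int f(x\,\hat{}\,y)\,d\nu(y)\,d\mu(x)$ for $f\in\ell^\infty(\mathbb{T})$. $\beta\mathbb{N}$ carries the usual extension of addition ($W\in\mathcal{U}+\mathcal{V}$ iff $\{m:\{n:m+n\in W\}\in\mathcal{V}\}\in\mathcal{U}$), and $\mathcal{U}$ is idempotent if $\mathcal{U}+\mathcal{U}=\mathcal{U}$. $\mathbb{A}_{\mathcal{U}}$ is the set of $\mu\in\Pr(\mathbb{T})$ such that for every weak*-open $W\ni\mu$, $\{m\in\mathbb{N}:W\cap\mathbb{A}_m\neq\emptyset\}\in\mathcal{U}$. 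*)

From Stdlib Require Import Reals List.
Open Scope R_scope.

(* The free binary system on one generator: full binary trees.
   [leaf] is the generator 1 = {1}, [hat a b] is a ^ b. *)
Inductive tree : Type :=
| leaf : tree
| hat : tree -> tree -> tree.

(* #(t): cardinality of the subset t of (0,1]; #(a^b) = #a + #b *)
Fixpoint card (t : tree) : nat :=
  match t with
  | leaf => 1%nat
  | hat a b => (card a + card b)%nat
  end.

Definition bounded {S : Type} (f : S -> R) : Prop :=
  exists M : R, forall s, Rabs (f s) <= M.

(* Pr(S): positive linear functionals on l^infty(S) with f(1) = 1
   (a functional is only ever evaluated on bounded functions). *)
Definition is_mean {S : Type} (m : (S -> R) -> R) : Prop :=
  (forall f g, bounded f -> bounded g ->
      m (fun s => f s + g s) = m f + m g) /\
  (forall (c : R) f, bounded f -> m (fun s => c * f s) = c * m f) /\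
  (forall f, bounded f -> (forall s, 0 <= f s) -> 0 <= m f) /\
  m (fun _ => 1) = 1.

(* open sets of Pr(S) in the weak* topology (generated by the evaluations
   at elements of l^infty(S)) *)
Definition weak_open {S : Type} (W : ((S -> R) -> R) -> Prop) : Prop :=
  forall mu, is_mean mu -> W mu ->
    exists (fs : list (S -> R)) (eps : R),
      0 < eps /\ (forall f, In f fs -> bounded f) /\
      forall nu, is_mean nu ->
        (forall f, In f fs -> Rabs (nu f - mu f) < eps) -> W nu.

(* A_n: probability measures on the finite set T_n, viewed in Pr(T):
   mu(f) = sum_i w_i f(t_i), with t_i in T_n, w_i >= 0, sum w_i = 1. *)
Definition in_A (n : nat) (mu : (tree -> R) -> R) : Prop :=
  exists l : list (R * tree),
    (forall p, In p l -> 0 <= fst p /\ card (snd p) = n) /\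
    fold_right Rplus 0 (map fst l) = 1 /\
    forall f, bounded f ->
      mu f = fold_right Rplus 0 (map (fun p => fst p * f (snd p)) l).

Definition conv (mu nu : (tree -> R) -> R) : (tree -> R) -> R :=
  fun f => mu (fun x => nu (fun y => f (hat x y))).

(* ultrafilters on N = {1,2,3,...} (subsets of nat containing the positives) *)
Definition ultrafilter (U : (nat -> Prop) -> Prop) : Prop :=
  (forall A B : nat -> Prop, U A -> (forall n, A n -> B n) -> U B) /\
  (forall A B : nat -> Prop, U A -> U B -> U (fun n => A n /\ B n)) /\
  ~ U (fun _ => False) /\
  (forall A : nat -> Prop, U A \/ U (fun n => ~ A n)) /\
  U (fun n => (0 < n)%nat).

Definition usum (U V : (nat -> Prop) -> Prop) : (nat -> Prop) -> Prop :=
  fun W => U (fun m => V (fun n => W (m + n)%nat)).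

Definition idempotent (U : (nat -> Prop) -> Prop) : Prop :=
  forall W : nat -> Prop, usum U U W <-> U W.

Definition in_AU (U : (nat -> Prop) -> Prop) (mu : (tree -> R) -> R) : Prop :=
  is_mean mu /\
  forall W, weak_open W -> W mu ->
    U (fun m => exists nu, W nu /\ in_A m nu).

(* A weak* neighbourhood of [mu ^ nu] is cut out by finitely many test
   functions [f].  Approximate [mu] by [mu1] in [A_a], testing against the
   functions [x |-> nu (f (x ^ .))]; [mu1] has finite support [t_1, ..., t_k],
   so [nu] can then be approximated by [nu1] in [A_b], testing against the
   finitely many functions [y |-> f (t_i ^ y)].  Then [mu1 ^ nu1] lies in
   [A_(a+b)] and is close to [mu ^ nu].  Both approximations hold for
   U-many [a], resp. [b], i.e. the set of [n] for which [A_n] meets the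
   neighbourhood belongs to [U + U], which is [U] by idempotence. *)

From Stdlib Require Import Reals List Lra FunctionalExtensionality.
(* Imported after [Reals], whose [bounded] would otherwise shadow ours. *)
Open Scope R_scope.

Section WeightedSums.

Context {S : Type}.

Definition weight (l : list (R * S)) : R := fold_right Rplus 0 (map fst l).

Definition wsum (l : list (R * S)) (f : S -> R) : R :=
  fold_right Rplus 0 (map (fun p => fst p * f (snd p)) l).

Lemma wsum_nil f : wsum nil f = 0.
Proof. reflexivity. Qed.

Lemma wsum_cons p l f : wsum (p :: l) f = fst p * f (snd p) + wsum l f.
Proof. reflexivity. Qed.

Lemma wsum_app l l' f : wsum (l ++ l') f = wsum l f + wsum l' f.
Proof.
  induction l as [|p l IH]; simpl app.
  - rewrite wsum_nil; ring.
  - rewrite !wsum_cons, IH; ring.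
Qed.

Lemma wsum_plus l f g : wsum l (fun s => f s + g s) = wsum l f + wsum l g.
Proof.
  induction l as [|p l IH]; [rewrite !wsum_nil; ring|].
  rewrite !wsum_cons, IH; ring.
Qed.

Lemma wsum_scal l c f : wsum l (fun s => c * f s) = c * wsum l f.
Proof.
  induction l as [|p l IH]; [rewrite !wsum_nil; ring|].
  rewrite !wsum_cons, IH; ring.
Qed.

Lemma wsum_const l c : wsum l (fun _ => c) = c * weight l.
Proof.
  induction l as [|p l IH]; [rewrite wsum_nil; unfold weight; simpl; ring|].
  rewrite wsum_cons, IH; unfold weight; simpl; ring.
Qed.

Lemma wsum_ext l f g :
  (forall p, In p l -> f (snd p) = g (snd p)) -> wsum l f = wsum l g.
Proof.
  induction l as [|p l IH]; intro Hfg; [reflexivity|].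
  rewrite !wsum_cons, (Hfg p), IH; simpl; auto.
  intros q Hq; apply Hfg; simpl; auto.
Qed.

Lemma wsum_nonneg l f :
  (forall p, In p l -> 0 <= fst p) -> (forall s, 0 <= f s) -> 0 <= wsum l f.
Proof.
  intros Hw Hf; induction l as [|p l IH]; [rewrite wsum_nil; lra|].
  rewrite wsum_cons.
  assert (0 <= fst p * f (snd p)) by (apply Rmult_le_pos; simpl in Hw; auto).
  assert (0 <= wsum l f) by (apply IH; simpl in Hw; auto).
  lra.
Qed.

Lemma wsum_dist_le l f g c :
  (forall p, In p l -> 0 <= fst p) ->
  (forall p, In p l -> Rabs (f (snd p) - g (snd p)) <= c) ->
  Rabs (wsum l f - wsum l g) <= c * weight l.
Proof.
  intros Hw Hfg.
  induction l as [|p l IH].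
  - rewrite !wsum_nil, Rminus_0_r, Rabs_R0; unfold weight; simpl; lra.
  - rewrite !wsum_cons.
    assert (Hp : 0 <= fst p) by (apply Hw; simpl; auto).
    assert (Hfgp := Hfg p (or_introl eq_refl)).
    assert (Hl := IH (fun q Hq => Hw q (or_intror Hq))
                     (fun q Hq => Hfg q (or_intror Hq))).
    replace (fst p * f (snd p) + wsum l f - (fst p * g (snd p) + wsum l g))
      with (fst p * (f (snd p) - g (snd p)) + (wsum l f - wsum l g)) by ring.
    eapply Rle_trans; [apply Rabs_triang|].
    rewrite Rabs_mult, (Rabs_right (fst p)) by lra.
    assert (fst p * Rabs (f (snd p) - g (snd p)) <= fst p * c)
      by (apply Rmult_le_compat_l; lra).
    unfold weight in *; simpl; lra.
Qed.

End WeightedSums.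

Definition wprod {A B C : Type} (op : A -> B -> C)
    (l : list (R * A)) (l' : list (R * B)) : list (R * C) :=
  flat_map (fun p => map (fun q => (fst p * fst q, op (snd p) (snd q))) l') l.

Lemma wsum_map {A B : Type} (c : R) (h : A -> B) l f :
  wsum (map (fun q => (c * fst q, h (snd q))) l) f = c * wsum l (fun y => f (h y)).
Proof.
  induction l as [|q l IH]; simpl map; [rewrite !wsum_nil; ring|].
  rewrite !wsum_cons, IH; simpl; ring.
Qed.

Lemma wsum_wprod {A B C : Type} (op : A -> B -> C) l l' f :
  wsum (wprod op l l') f = wsum l (fun x => wsum l' (fun y => f (op x y))).
Proof.
  induction l as [|p l IH]; [reflexivity|].
  unfold wprod; simpl flat_map; fold (wprod op l l').
  rewrite wsum_app, IH, wsum_cons, wsum_map; reflexivity.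
Qed.

Lemma weight_wprod {A B C : Type} (op : A -> B -> C) l l' :
  weight (wprod op l l') = weight l * weight l'.
Proof.
  rewrite <- (Rmult_1_l (weight _)), <- wsum_const, wsum_wprod.
  rewrite (wsum_ext l _ (fun _ => weight l')) by (intros; rewrite wsum_const; ring).
  rewrite wsum_const; ring.
Qed.

Section Means.

Context {S : Type}.

Lemma bounded_plus (f g : S -> R) :
  bounded f -> bounded g -> bounded (fun s => f s + g s).
Proof.
  intros [M HM] [N HN]; exists (M + N); intro s.
  eapply Rle_trans; [apply Rabs_triang|].
  specialize (HM s); specialize (HN s); lra.
Qed.

Lemma bounded_scal c (f : S -> R) : bounded f -> bounded (fun s => c * f s).
Proof.
  intros [M HM]; exists (Rabs c * M); intro s.
  rewrite Rabs_mult; apply Rmult_le_compat_l; [apply Rabs_pos | auto].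
Qed.

Lemma bounded_const c : bounded (fun _ : S => c).
Proof. exists (Rabs c); intros; lra. Qed.

Lemma mean_const (m : (S -> R) -> R) c : is_mean m -> m (fun _ => c) = c.
Proof.
  intros [_ [Hscal [_ H1]]].
  replace (fun _ : S => c) with (fun _ : S => c * 1)
    by (apply functional_extensionality; intro; ring).
  rewrite Hscal, H1 by apply bounded_const; ring.
Qed.

(* Positivity applied to [M - f] and [M + f]. *)
Lemma mean_abs_le (m : (S -> R) -> R) f M :
  is_mean m -> (forall s, Rabs (f s) <= M) -> Rabs (m f) <= M.
Proof.
  intros Hm HM.
  pose proof Hm as [Hadd [Hscal [Hpos _]]].
  assert (Hf : bounded f) by (exists M; auto).
  assert (Hshift : forall c, m (fun s => M + c * f s) = M + c * m f).
  { intro c.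
    rewrite (Hadd (fun _ => M) (fun s => c * f s)), Hscal, mean_const
      by (auto using bounded_const, bounded_scal).
    reflexivity. }
  assert (Hlo : 0 <= m (fun s => M + -1 * f s)).
  { apply Hpos; [apply bounded_plus; auto using bounded_const, bounded_scal|].
    intro s; specialize (HM s).
    pose proof (Rle_abs (f s)); pose proof (Rle_abs (- f s)).
    rewrite Rabs_Ropp in *; lra. }
  assert (Hhi : 0 <= m (fun s => M + 1 * f s)).
  { apply Hpos; [apply bounded_plus; auto using bounded_const, bounded_scal|].
    intro s; specialize (HM s).
    pose proof (Rle_abs (f s)); pose proof (Rle_abs (- f s)).
    rewrite Rabs_Ropp in *; lra. }
  rewrite Hshift in Hlo, Hhi; apply Rabs_le; lra.
Qed.

Definition represents (l : list (R * S)) (m : (S -> R) -> R) : Prop :=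
  (forall p, In p l -> 0 <= fst p) /\ weight l = 1 /\
  forall f, bounded f -> m f = wsum l f.

Lemma represents_is_mean l m : represents l m -> is_mean m.
Proof.
  intros [Hw [H1 Hm]]; repeat split.
  - intros f g Hf Hg; rewrite !Hm by auto using bounded_plus; apply wsum_plus.
  - intros c f Hf; rewrite !Hm by auto using bounded_scal; apply wsum_scal.
  - intros f Hf Hpos; rewrite Hm by auto; apply wsum_nonneg; auto.
  - rewrite Hm, wsum_const, H1 by apply bounded_const; ring.
Qed.

End Means.

Definition translate (t : tree) (f : tree -> R) : tree -> R :=
  fun y => f (hat t y).

Definition slice (nu : (tree -> R) -> R) (f : tree -> R) : tree -> R :=
  fun x => nu (translate x f).

Lemma bounded_translate t f : bounded f -> bounded (translate t f).
Proof. intros [M HM]; exists M; intro; apply HM. Qed.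

Lemma bounded_slice nu f : is_mean nu -> bounded f -> bounded (slice nu f).
Proof.
  intros Hnu [M HM]; exists M; intro x.
  apply (mean_abs_le nu); [exact Hnu | intro; apply HM].
Qed.

Lemma is_mean_conv mu nu : is_mean mu -> is_mean nu -> is_mean (conv mu nu).
Proof.
  intros Hmu Hnu.
  pose proof Hmu as [Madd [Mscal [Mpos _]]].
  pose proof Hnu as [Nadd [Nscal [Npos _]]].
  repeat split.
  - intros f g Hf Hg.
    change (mu (slice nu (fun s => f s + g s)) = mu (slice nu f) + mu (slice nu g)).
    rewrite <- Madd by (apply bounded_slice; auto).
    f_equal; apply functional_extensionality; intro x.
    apply (Nadd (translate x f) (translate x g)); apply bounded_translate; auto.
  - intros c f Hf.
    change (mu (slice nu (fun s => c * f s)) = c * mu (slice nu f)).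
    rewrite <- Mscal by (apply bounded_slice; auto).
    f_equal; apply functional_extensionality; intro x.
    apply (Nscal c (translate x f)); apply bounded_translate; auto.
  - intros f Hf Hpos; apply Mpos; [apply bounded_slice; auto|].
    intro x; apply Npos; [apply bounded_translate; auto | intro; apply Hpos].
  - unfold conv; rewrite (mean_const nu 1), mean_const by auto; reflexivity.
Qed.

Lemma represents_conv l l' mu nu :
  represents l mu -> represents l' nu -> represents (wprod hat l l') (conv mu nu).
Proof.
  intros [Hw [H1 Hmu]] Hnu'.
  pose proof Hnu' as [Hw' [H1' Hnu]].
  pose proof (represents_is_mean _ _ Hnu') as Hnu_mean.
  repeat split.
  - intros r Hr; unfold wprod in Hr; apply in_flat_map in Hr.
    destruct Hr as [p [Hp Hr]]; apply in_map_iff in Hr.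
    destruct Hr as [q [<- Hq]]; apply Rmult_le_pos; auto.
  - rewrite weight_wprod, H1, H1'; ring.
  - intros f Hf; change (mu (slice nu f) = wsum (wprod hat l l') f).
    rewrite Hmu, wsum_wprod by (apply bounded_slice; auto).
    apply wsum_ext; intros p _; apply Hnu, bounded_translate, Hf.
Qed.

Lemma in_A_iff n m :
  in_A n m <-> exists l, represents l m /\ forall p, In p l -> card (snd p) = n.
Proof.
  split.
  - intros [l [Hl [H1 Hm]]]; exists l; repeat split; auto; apply Hl; auto.
  - intros [l [[Hw [H1 Hm]] Hcard]]; exists l; repeat split; auto.
Qed.

Lemma in_A_is_mean n m : in_A n m -> is_mean m.
Proof. rewrite in_A_iff; intros [l [Hl _]]; apply (represents_is_mean l), Hl. Qed.

Lemma in_A_conv a b mu nu : in_A a mu -> in_A b nu -> in_A (a + b) (conv mu nu).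
Proof.
  rewrite !in_A_iff; intros [l [Hl Hcard]] [l' [Hl' Hcard']].
  exists (wprod hat l l'); split; [apply represents_conv; auto|].
  intros r Hr; unfold wprod in Hr; apply in_flat_map in Hr.
  destruct Hr as [p [Hp Hr]]; apply in_map_iff in Hr.
  destruct Hr as [q [<- Hq]]; simpl.
  rewrite Hcard, Hcard'; auto.
Qed.

(* A basic weak* neighbourhood; the slack [d] is what makes it open. *)
Definition weak_ball {S : Type} (m0 : (S -> R) -> R) (gs : list (S -> R)) (e : R)
    (m : (S -> R) -> R) : Prop :=
  exists d, 0 < d /\ forall g, In g gs -> Rabs (m g - m0 g) + d < e.

Lemma weak_open_ball {S : Type} (m0 : (S -> R) -> R) gs e :
  (forall g, In g gs -> bounded g) -> weak_open (weak_ball m0 gs e).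
Proof.
  intros Hgs m _ [d [Hd Hm]]; exists gs, (d / 2); repeat split; auto; [lra|].
  intros m' _ Hm'; exists (d / 2); split; [lra|]; intros g Hg.
  specialize (Hm g Hg); specialize (Hm' g Hg).
  pose proof (Rabs_triang (m' g - m g) (m g - m0 g)).
  replace (m' g - m g + (m g - m0 g)) with (m' g - m0 g) in * by ring; lra.
Qed.

Lemma weak_ball_center {S : Type} (m0 : (S -> R) -> R) gs e :
  0 < e -> weak_ball m0 gs e m0.
Proof.
  intro He; exists (e / 2); split; [lra|]; intros.
  rewrite Rminus_diag, Rabs_R0; lra.
Qed.

Lemma in_AU_approx U mu gs e :
  ultrafilter U -> in_AU U mu -> (forall g, In g gs -> bounded g) -> 0 < e ->
  U (fun m => exists rho, in_A m rho /\
                forall g, In g gs -> Rabs (rho g - mu g) < e).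
Proof.
  intros [Hmono _] [_ HU] Hgs He.
  apply (Hmono _ _ (HU _ (weak_open_ball mu gs e Hgs) (weak_ball_center mu gs e He))).
  intros m [rho [[d [Hd Hrho]] HA]]; exists rho; split; auto.
  intros g Hg; specialize (Hrho g Hg); lra.
Qed.

Lemma conv_approx l mu nu mu1 nu1 f e1 e2 :
  is_mean nu -> is_mean nu1 -> represents l mu1 -> bounded f ->
  Rabs (mu1 (slice nu f) - mu (slice nu f)) < e1 ->
  (forall p, In p l ->
     Rabs (nu1 (translate (snd p) f) - nu (translate (snd p) f)) < e2) ->
  Rabs (conv mu1 nu1 f - conv mu nu f) < e1 + e2.
Proof.
  intros Hnu Hnu1 [Hw [H1 Hmu1]] Hf Hmu_near Hnu_near.
  assert (Hinner : Rabs (mu1 (slice nu1 f) - mu1 (slice nu f)) <= e2).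
  { rewrite !Hmu1 by auto using bounded_slice.
    rewrite <- (Rmult_1_r e2), <- H1.
    apply wsum_dist_le; auto.
    intros p Hp; apply Rlt_le, Hnu_near, Hp. }
  change (Rabs (mu1 (slice nu1 f) - mu (slice nu f)) < e1 + e2).
  pose proof (Rabs_triang (mu1 (slice nu1 f) - mu1 (slice nu f))
                          (mu1 (slice nu f) - mu (slice nu f))).
  replace (mu1 (slice nu1 f) - mu1 (slice nu f) + (mu1 (slice nu f) - mu (slice nu f)))
    with (mu1 (slice nu1 f) - mu (slice nu f)) in * by ring.
  lra.
Qed.

Theorem lemma3p1 (U : (nat -> Prop) -> Prop) (mu nu : (tree -> R) -> R) :
  ultrafilter U -> idempotent U ->
  in_AU U mu -> in_AU U nu -> in_AU U (conv mu nu).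
Proof.
  intros HU Hidem Hmu Hnu.
  pose proof HU as [Hmono _].
  pose proof (is_mean_conv _ _ (proj1 Hmu) (proj1 Hnu)) as Hconv.
  split; [exact Hconv|]; intros W HW HWc.
  destruct (HW _ Hconv HWc) as [fs [eps [Heps [Hfs HWball]]]].
  apply Hidem.
  assert (Hslices : forall g, In g (map (slice nu) fs) -> bounded g).
  { intros g Hg; apply in_map_iff in Hg; destruct Hg as [f [<- Hf]].
    apply bounded_slice; [apply Hnu | auto]. }
  apply (Hmono _ _ (in_AU_approx U mu _ (eps / 2) HU Hmu Hslices ltac:(lra))).
  intros a [mu1 [HA1 Hmu1]].
  destruct (proj1 (in_A_iff _ _) HA1) as [l [Hl _]].
  set (gs := flat_map (fun f => map (fun p => translate (snd p) f) l) fs).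
  assert (Htranslates : forall g, In g gs -> bounded g).
  { intros g Hg; apply in_flat_map in Hg; destruct Hg as [f [Hf Hg]].
    apply in_map_iff in Hg; destruct Hg as [p [<- _]].
    apply bounded_translate; auto. }
  apply (Hmono _ _ (in_AU_approx U nu gs (eps / 2) HU Hnu Htranslates ltac:(lra))).
  intros b [nu1 [HB1 Hnu1]].
  exists (conv mu1 nu1); split; [|apply in_A_conv; auto].
  apply HWball; [apply is_mean_conv; eapply in_A_is_mean; eauto|].
  intros f Hf; replace eps with (eps / 2 + eps / 2) by field.
  apply (conv_approx l); auto.
  - apply Hnu.
  - eapply in_A_is_mean; eauto.
  - apply Hmu1, in_map, Hf.
  - intros p Hp; apply Hnu1, in_flat_map; exists f; split; [exact Hf|].
    apply in_map_iff; exists p; auto.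
Qed.
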